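(* Let $\rho$ be a Drinfeld $\mathbb{F}_q[t]$-module over $\overline{k}$. If $u_1,\dots,u_n\in\mathbb{C}_\infty$ are linearly independent over $k$, then the functions $f_{u_1}(t),\dots,f_{u_n}(t)$ are linearly independent over $\mathbb{F}_q(t)$.
   Context: $\mathbb{F}_q$ is the field with $q$ elements, $\theta,t$ independent variables, $k=\mathbb{F}_q(\theta)$, $\mathbb{C}_\infty$ the completion of an algebraic closure of $\mathbb{F}_q((1/\theta))$, $\overline{k}$ the algebraic closure of $k$ in $\mathbb{C}_\infty$. $\tau$ is the $q$-power Frobenius; $\rho$ is an $\mathbb{F}_q$-algebra map $\mathbb{F}_q[t]\to\overline{k}[\tau]$ with $\rho_t=\theta+\kappa_1\tau+\dots+\kappa_r\tau^r$, $\kappa_r\ne0$, acting on $\mathbb{C}_\infty$ by $(\sum c_i\tau^i)(x)=\sum c_ix^{q^i}$. $\exp_\rho(z)=z+\sum_{i\ge1}\alpha_iz^{q^i}$ is the unique entire $\mathbb{F}_q$-linear series with $\exp_\rho(\theta z)=\rho_t(\exp_\rho(z))$. For $u\in\mathbb{C}_\infty$, $f_u(t)=\sum_{m\ge0}\exp_\rho(u/\theta^{m+1})t^m=\sum_{i\ge0}\alpha_iu^{q^i}/(\theta^{q^i}-t)$ ($\alpha_0=1$), a power series in $t$ converging on $|t|_\infty\le1$ that extends to a meromorphic function on $\mathbb{C}_\infty$. *)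

From HB Require Import structures.
From mathcomp Require Import all_boot all_order all_algebra.
From mathcomp Require Import reals.
Set Implicit Arguments. Unset Strict Implicit. Unset Printing Implicit Defensive.
Import Order.TTheory GRing.Theory Num.Theory.
Local Open Scope ring_scope.

Section Valued.
Variables (R : realType) (C : fieldType) (av : C -> R).

Definition is_nonarch_abs : Prop :=
  [/\ forall x, (av x == 0) = (x == 0),
      forall x, 0 <= av x,
      forall x y, av (x * y) = av x * av y &
      forall x y, av (x + y) <= Num.max (av x) (av y)].

Definition cvg_to (s : nat -> C) (l : C) : Prop :=
  forall eps : R, 0 < eps -> exists N, forall n, (N <= n)%N -> av (s n - l) < eps.

Definition cauchy_seq (s : nat -> C) : Prop :=
  forall eps : R, 0 < eps -> exists N, forall m n,
    (N <= m)%N -> (N <= n)%N -> av (s m - s n) < eps.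

Definition complete_abs : Prop := forall s, cauchy_seq s -> exists l, cvg_to s l.

Definition series_to (a : nat -> C) (l : C) : Prop :=
  cvg_to (fun n => \sum_(i < n) a i) l.
End Valued.

Section K.
Variables (F : finFieldType) (C : fieldType) (iota : {rmorphism F -> C}) (theta : C).

Definition in_k (x : C) : Prop :=
  exists p q : {poly F}, (map_poly iota q).[theta] != 0 /\
    x = (map_poly iota p).[theta] / (map_poly iota q).[theta].

Definition in_kbar (x : C) : Prop :=
  exists P : {poly C}, P != 0 /\ (forall i, in_k P`_i) /\ root P x.
End K.

Definition rho_t (F : finFieldType) (C : fieldType) (theta : C) (r : nat)
  (kappa : nat -> C) (x : C) : C :=
  theta * x + \sum_(1 <= i < r.+1) kappa i * x ^+ (#|F| ^ i).

(* m-th Taylor coefficient of f_u(t) = sum_m exp_rho(u/theta^{m+1}) t^m *)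
Definition f_coeff (C : fieldType) (theta : C) (E : C -> C) (u : C) (m : nat) : C :=
  E (u / theta ^+ m.+1).

(** The coefficient of t^N in sum_i a_i(t) f_{u_i}(t) is
    sum_{i,j} a_{ij} exp_rho(u_i / theta^(N-j+1)).  Since exp_rho(z) = z + O(|z|^2) for
    |z| <= 1, multiplying by theta^(N+1) turns it into
    S = sum_i a_i(theta) u_i plus an error of size O(|theta|^(-N)).  If all coefficients
    vanish, |S| |theta|^N stays bounded, so S = 0; linear independence of the u_i over k
    gives a_i(theta) = 0, and theta is transcendental over F_q because |theta| > 1. *)
From HB Require Import structures.
From mathcomp Require Import all_boot all_order all_algebra.
From mathcomp Require Import reals.
From mathcomp Require Import finfield ring.
Import Order.TTheory GRing.Theory Num.Theory.
Local Open Scope ring_scope.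
Set Implicit Arguments. Unset Strict Implicit.

Section Growth.
Variable R : archiRealFieldType.

Lemma bernoulli_ineq (T : R) n : 1 <= T -> 1 + n%:R * (T - 1) <= T ^+ n.
Proof.
move=> T_ge1; elim: n => [|n IH]; first by rewrite mul0r addr0 expr0.
have -> : T ^+ n.+1 = T ^+ n + T ^+ n * (T - 1) by rewrite exprS; ring.
rewrite mulrSr mulrDl addrA lerD // ler_wpM2r ?exprn_ege1 //.
by rewrite subr_ge0.
Qed.

Lemma expr_unbounded (T B : R) :
  1 < T -> exists m, forall k, (m <= k)%N -> B < T ^+ k.
Proof.
move=> T_gt1; have T1_gt0 : 0 < T - 1 by rewrite subr_gt0.
have x_ge0 : 0 <= `|B| / (T - 1) by rewrite divr_ge0 ?normr_ge0 ?ltW.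
exists (Num.Def.archi_bound (`|B| / (T - 1))) => k k_ge.
have : `|B| / (T - 1) < k%:R.
  by rewrite (lt_le_trans (archi_boundP x_ge0)) // ler_nat.
rewrite ltr_pdivrMr // => B_lt.
rewrite (le_lt_trans (ler_norm B)) // (lt_le_trans B_lt) //.
by rewrite (le_trans _ (bernoulli_ineq k (ltW T_gt1))) // lerDr ler01.
Qed.

Lemma geometric_bounded_eq0 (s K T : R) m0 :
  0 <= s -> 1 < T -> (forall m, (m0 <= m)%N -> s * T ^+ m <= K) -> s = 0.
Proof.
move=> s_ge0 T_gt1 sTK; apply/eqP; rewrite eq_le s_ge0 andbT leNgt.
apply/negP => s_gt0; have [m Tm] := expr_unbounded (K / s) T_gt1.
have := Tm (maxn m0 m) (leq_maxr _ _); rewrite ltr_pdivrMr // mulrC ltNge.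
by rewrite sTK ?leq_maxl.
Qed.

End Growth.

Lemma horner_scaled_sum (C : fieldType) (p : {poly C}) (theta x : C) N :
  theta != 0 -> (size p <= N.+1)%N ->
  theta ^+ N.+1 * \sum_(j < N.+1) p`_j * (x / theta ^+ (N - j).+1) = p.[theta] * x.
Proof.
move=> theta_neq0 size_p; rewrite (horner_coef_wide theta size_p) mulr_sumr mulr_suml.
apply: eq_bigr => j _; have j_le_N : (j <= N)%N by rewrite -ltnS.
rewrite -[in theta ^+ N.+1](subnKC j_le_N) -addnS exprD.
by field; rewrite expf_neq0.
Qed.

Lemma in_k_horner (F : finFieldType) (C : fieldType) (iota : {rmorphism F -> C})
    (theta : C) (p : {poly F}) :
  in_k iota theta (map_poly iota p).[theta].
Proof.
by exists p, 1; rewrite rmorph1 hornerC divr1 oner_neq0.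
Qed.

Section NonArchimedeanAbs.
Variables (R : realType) (C : fieldType) (av : C -> R).
Hypothesis Hav : is_nonarch_abs av.

Lemma av_eq0 x : (av x == 0) = (x == 0). Proof. by case: Hav. Qed.
Lemma av_ge0 x : 0 <= av x. Proof. by case: Hav. Qed.
Lemma avM x y : av (x * y) = av x * av y. Proof. by case: Hav. Qed.
Lemma avD x y : av (x + y) <= Num.max (av x) (av y). Proof. by case: Hav. Qed.

Lemma av0 : av 0 = 0. Proof. by apply/eqP; rewrite av_eq0. Qed.

Lemma av1 : av 1 = 1.
Proof.
have av1_neq0 : av 1 != 0 by rewrite av_eq0 oner_eq0.
by apply: (mulfI av1_neq0); rewrite -avM !mulr1.
Qed.

Lemma avN x : av (- x) = av x.
Proof.
have avN1 : av (-1) = 1.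
  by apply/eqP; rewrite -sqrp_eq1 ?av_ge0 // expr2 -avM mulrNN mulr1 av1.
by rewrite -mulN1r avM avN1 mul1r.
Qed.

Lemma avX x n : av (x ^+ n) = av x ^+ n.
Proof. by elim: n => [|n IH]; rewrite ?expr0 ?av1 // !exprS avM IH. Qed.

Lemma avV x : av x^-1 = (av x)^-1.
Proof.
have [->|x_neq0] := eqVneq x 0; first by rewrite invr0 av0 invr0.
apply: (mulfI (_ : av x != 0)); first by rewrite av_eq0.
by rewrite -avM !divff ?av1 // av_eq0.
Qed.

Lemma avB x y : av (x - y) <= Num.max (av x) (av y).
Proof. by rewrite -(avN y) avD. Qed.

Lemma av_sum_le (I : Type) (s : seq I) (P : pred I) (G : I -> C) (B : R) :
  0 <= B -> (forall i, P i -> av (G i) <= B) -> av (\sum_(i <- s | P i) G i) <= B.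
Proof.
move=> B_ge0 GB; apply: (big_ind (fun x => av x <= B)) => //; first by rewrite av0.
by move=> x y xB yB; rewrite (le_trans (avD x y)) // ge_max xB yB.
Qed.

Lemma av_addr_lt x y : av y < av x -> av (x + y) = av x.
Proof.
move=> yx; apply/eqP; rewrite eq_le (le_trans (avD x y)) ?ge_max ?lexx ?(ltW yx) //=.
have := avD (x + y) (- y); rewrite addrK avN le_max => /orP[//|].
by rewrite leNgt yx.
Qed.

(* The image of a finite field consists of roots of unity and 0. *)
Lemma av_fmorph (F : finFieldType) (iota : {rmorphism F -> C}) c :
  c != 0 -> av (iota c) = 1.
Proof.
move=> c_neq0; have q_gt1 := card_finNzRing_gt1 F.
have av_neq0 : av (iota c) != 0 by rewrite av_eq0 fmorph_eq0.
have /(congr1 av) : iota c ^+ #|F| = iota c by rewrite -rmorphXn expf_card.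
rewrite avX -(prednK (ltnW q_gt1)) exprSr => /(canRL (mulfK av_neq0)).
rewrite divff // => /eqP; rewrite pexpr_eq1 ?av_ge0 ?prednK ?(ltnW q_gt1) //.
  by move/eqP.
by rewrite -ltnS prednK // ltnW.
Qed.

Lemma av_fmorph_le1 (F : finFieldType) (iota : {rmorphism F -> C}) c :
  av (iota c) <= 1.
Proof.
by have [->|/av_fmorph->] := eqVneq c 0; rewrite ?rmorph0 ?av0 ?ler01.
Qed.

(* The leading monomial dominates, so an element of absolute value > 1 is
   transcendental over the prime field. *)
Lemma horner_map_neq0 (F : finFieldType) (iota : {rmorphism F -> C}) theta
    (p : {poly F}) :
  1 < av theta -> p != 0 -> (map_poly iota p).[theta] != 0.
Proof.
move=> theta_gt1 p_neq0; set P := map_poly iota p; set d := (size p).-1.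
have theta_gt0 : 0 < av theta := lt_trans ltr01 theta_gt1.
have sizeP : size P = d.+1 by rewrite size_map_poly prednK // size_poly_gt0.
have lead_av : av (P`_d * theta ^+ d) = av theta ^+ d.
  by rewrite avM avX coef_map av_fmorph ?mul1r // -lead_coefE lead_coef_eq0.
have lower_lt : av (\sum_(i < d) P`_i * theta ^+ i) < av theta ^+ d.
  have [->|d_gt0] := posnP d; first by rewrite big_ord0 av0 expr0 ltr01.
  apply: (le_lt_trans (y := av theta ^+ d.-1)).
    apply: av_sum_le => [|i _]; first by rewrite exprn_ge0 ?ltW.
    rewrite avM avX coef_map -[leRHS]mul1r ler_pM ?exprn_ge0 ?av_ge0 ?av_fmorph_le1 //.
    by rewrite ler_weXn2l ?(ltW theta_gt1) // -ltnS prednK.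
  by rewrite -[X in _ < _ ^+ X](prednK d_gt0) exprS ltr_pMl ?exprn_gt0.
rewrite -av_eq0 (horner_coef_wide theta (n := d.+1)) ?sizeP // big_ord_recr /=.
by rewrite addrC av_addr_lt lead_av ?lower_lt // expf_neq0 ?gt_eqF.
Qed.

Lemma series_term_bounded (a : nat -> C) (l : C) :
  series_to av a l -> exists M, forall k, av (a k) <= M.
Proof.
move=> /(_ 1 ltr01) [N tail_lt1].
exists (Num.max 1 (\sum_(k < N) av (a k))) => k; rewrite le_max.
have [k_lt_N|N_le_k] := ltnP k N.
  rewrite (bigD1 (Ordinal k_lt_N)) //= ler_wpDr ?orbT // sumr_ge0 // => *.
  exact: av_ge0.
have -> : a k = (\sum_(i < k.+1) a i - l) - (\sum_(i < k) a i - l).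
  by rewrite big_ord_recr /= opprB addrA subrK addrC addKr.
by rewrite (le_trans (avB _ _)) // ge_max !ltW ?tail_lt1 ?leqW.
Qed.

Lemma av_series_sub_le (q : nat) (alpha : nat -> C) (E : C -> C) (M : R) :
  (1 < q)%N -> alpha 0%N = 1 -> (forall k, av (alpha k) <= M) ->
  (forall z, series_to av (fun i => alpha i * z ^+ (q ^ i)) (E z)) ->
  forall z, av z <= 1 -> av (E z - z) <= M * av z ^+ 2.
Proof.
move=> q_gt1 alpha0 alphaM HE z z_le1.
have M_ge0 : 0 <= M := le_trans (av_ge0 _) (alphaM 0%N).
apply/ler_addgt0Pr => e e_gt0; have [N HN] := HE z e e_gt0.
have S_near : av (\sum_(i < N.+1) alpha i * z ^+ (q ^ i) - E z) < e by apply: HN.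
have -> : E z - z = - (\sum_(i < N.+1) alpha i * z ^+ (q ^ i) - E z)
                    + \sum_(i < N) alpha i.+1 * z ^+ (q ^ i.+1).
  by rewrite big_ord_recl /= alpha0 mul1r expn0 expr1; ring.
rewrite (le_trans (avD _ _)) // ge_max avN; apply/andP; split.
  by apply: ler_wpDl; [rewrite mulr_ge0 ?exprn_ge0 ?av_ge0 | exact: ltW].
apply: ler_wpDr; first exact: ltW.
apply: av_sum_le => [|i _]; first by rewrite mulr_ge0 ?exprn_ge0 ?av_ge0.
rewrite avM avX ler_pM ?av_ge0 ?exprn_ge0 ?av_ge0 // ler_wiXn2l ?av_ge0 //.
by rewrite expnS (leq_trans q_gt1) // leq_pmulr // expn_gt0 (ltnW q_gt1).
Qed.

Section CoefficientEstimate.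
Variables (F : finFieldType) (iota : {rmorphism F -> C}) (theta : C) (E : C -> C) (M : R).
Hypotheses (theta_gt1 : 1 < av theta) (M_ge0 : 0 <= M).
Hypothesis E_near_id : forall z, av z <= 1 -> av (E z - z) <= M * av z ^+ 2.

Let T := av theta.
Let T_gt0 : 0 < T. Proof. exact: lt_trans ltr01 theta_gt1. Qed.

Lemma av_exp_error_le (p : {poly F}) (x : C) (U : R) D m :
  (size p <= D)%N -> av x <= U -> U <= T ^+ m.+1 ->
  av (\sum_(j < (D + m).+1) iota p`_j *
        (E (x / theta ^+ (D + m - j).+1) - x / theta ^+ (D + m - j).+1))
    <= M * (U / T ^+ m.+1) ^+ 2.
Proof.
move=> size_p x_le_U U_le.
have U_ge0 : 0 <= U := le_trans (av_ge0 x) x_le_U.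
have bound_ge0 : 0 <= M * (U / T ^+ m.+1) ^+ 2.
  by rewrite mulr_ge0 // exprn_ge0 // divr_ge0 // exprn_ge0 // ltW.
apply: av_sum_le => // j _.
have [j_lt|j_ge] := ltnP j (size p); last by rewrite nth_default ?rmorph0 ?mul0r ?av0.
have z_le : av (x / theta ^+ (D + m - j).+1) <= U / T ^+ m.+1.
  rewrite avM avV avX ler_pM ?av_ge0 ?invr_ge0 ?exprn_ge0 ?av_ge0 //.
  rewrite lef_pV2 ?posrE ?exprn_gt0 // ler_weXn2l ?(ltW theta_gt1) //.
  by rewrite ltnS -addnBAC ?leq_addl // (leq_trans (ltnW j_lt)).
have z_le1 : U / T ^+ m.+1 <= 1 by rewrite ler_pdivrMr ?exprn_gt0 // mul1r.
rewrite avM -[leRHS]mul1r ler_pM ?av_ge0 ?av_fmorph_le1 //.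
rewrite (le_trans (E_near_id (le_trans z_le z_le1))) // ler_wpM2l //.
by rewrite ler_pXn2r ?nnegrE ?av_ge0 ?(le_trans (av_ge0 _) z_le).
Qed.

Lemma av_horner_lincomb_le n (a : 'I_n -> {poly F}) (u : 'I_n -> C) (U : R) D m :
  (forall i, size (a i) <= D)%N -> 0 <= U -> (forall i, av (u i) <= U) -> U <= T ^+ m.+1 ->
  \sum_i \sum_(j < (D + m).+1) iota (a i)`_j * f_coeff theta E (u i) (D + m - j) = 0 ->
  av (\sum_i (map_poly iota (a i)).[theta] * u i) * T ^+ m.+1 <= T ^+ D * M * U ^+ 2.
Proof.
move=> size_a U_ge0 u_le_U U_le coef_eq0; set N := (D + m)%N.
have theta_neq0 : theta != 0 by rewrite -av_eq0 gt_eqF.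
pose z i j := u i / theta ^+ (N - j).+1.
pose err := \sum_i \sum_(j < N.+1) iota (a i)`_j * (E (z i j) - z i j).
have lin_eq : \sum_i (map_poly iota (a i)).[theta] * u i
              = theta ^+ N.+1 * \sum_i \sum_(j < N.+1) iota (a i)`_j * z i j.
  rewrite mulr_sumr; apply: eq_bigr => i _.
  rewrite -(horner_scaled_sum (N := N) _ theta_neq0) //.
    by congr (_ * _); apply: eq_bigr => j _; rewrite coef_map.
  by rewrite size_map_poly (leq_trans (size_a i)) // leqW ?leq_addr.
have lin_err : \sum_i \sum_(j < N.+1) iota (a i)`_j * z i j = - err.
  apply/eqP; rewrite -addr_eq0 -big_split /=; apply/eqP.
  rewrite -[RHS]coef_eq0; apply: eq_bigr => i _; rewrite -big_split.
  by apply: eq_bigr => j _ /=; rewrite -mulrDr addrC subrK.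
have err_le : av err <= M * (U / T ^+ m.+1) ^+ 2.
  apply: av_sum_le => [|i _]; last exact: av_exp_error_le (size_a i) (u_le_U i) U_le.
  by rewrite mulr_ge0 // exprn_ge0 // divr_ge0 // exprn_ge0 // ltW.
rewrite lin_eq lin_err avM avN avX -/T.
have -> : T ^+ D * M * U ^+ 2
          = T ^+ N.+1 * (M * (U / T ^+ m.+1) ^+ 2) * T ^+ m.+1.
  by rewrite /N -addnS exprD; field; rewrite expf_neq0 ?gt_eqF.
have T_pow_ge0 k : 0 <= T ^+ k by rewrite exprn_ge0 // ltW.
by rewrite ler_wpM2r // ler_wpM2l.
Qed.

End CoefficientEstimate.

End NonArchimedeanAbs.

Unset Implicit Arguments. Set Strict Implicit.
Theorem lemma3p5
  (R : realType) (F : finFieldType) (C : closedFieldType)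
  (iota : {rmorphism F -> C}) (av : C -> R) (theta : C)
  (Hav : is_nonarch_abs av) (Hcomp : complete_abs av) (Htheta : 1 < av theta)
  (Hdense : forall (x : C) (eps : R), 0 < eps ->
              exists y, in_kbar iota theta y /\ av (x - y) < eps)
  (r : nat) (kappa : nat -> C) (Hr : (0 < r)%N) (Hkr : kappa r != 0)
  (Hk : forall i, (1 <= i <= r)%N -> in_kbar iota theta (kappa i))
  (alpha : nat -> C) (E : C -> C) (Ha0 : alpha 0%N = 1)
  (HE : forall z, series_to av (fun i => alpha i * z ^+ (#|F| ^ i)) (E z))
  (Hfun : forall z, E (theta * z) = rho_t F theta r kappa (E z))
  (n : nat) (u : 'I_n -> C)
  (Hu : forall b : 'I_n -> C, (forall i, in_k iota theta (b i)) ->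
          \sum_i b i * u i = 0 -> forall i, b i = 0) :
  forall a : 'I_n -> {poly F},
    (forall m : nat,
       \sum_i \sum_(j < m.+1) iota (a i)`_j * f_coeff theta E (u i) (m - j) = 0) ->
    forall i, a i = 0.
Proof.
move=> a coef_eq0.
have [M alphaM] := series_term_bounded Hav (HE 1).
have {}alphaM k : av (alpha k) <= M by have := alphaM k; rewrite expr1n mulr1.
have M_ge0 : 0 <= M := le_trans (av_ge0 Hav _) (alphaM 0%N).
have E_near_id := av_series_sub_le Hav (card_finNzRing_gt1 F) Ha0 alphaM HE.
set D := \max_i size (a i); set U := \sum_i av (u i).
have U_ge0 : 0 <= U by rewrite sumr_ge0 // => i _; apply: av_ge0.
have u_le_U i : av (u i) <= U.
  by rewrite /U (bigD1 i) //= ler_wpDr // sumr_ge0 // => j _; apply: av_ge0.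
have [m0 U_lt] := expr_unbounded U Htheta.
have lincomb_eq0 : \sum_i (map_poly iota (a i)).[theta] * u i = 0.
  apply/eqP; rewrite -(av_eq0 Hav); apply/eqP.
  apply: (geometric_bounded_eq0 (K := av theta ^+ D * M * U ^+ 2) (m0 := m0.+1)
            (av_ge0 Hav _) Htheta) => -[//|m] m0_le.
  apply: (av_horner_lincomb_le Hav Htheta M_ge0 E_near_id) => //.
  - by move=> i; exact: leq_bigmax.
  - exact: ltW (U_lt _ (ltnW m0_le)).
move=> i; apply/eqP/contraT => ai_neq0.
have := horner_map_neq0 Hav iota Htheta ai_neq0.
by rewrite (Hu _ (fun k => in_k_horner iota theta (a k)) lincomb_eq0 i) eqxx.
Qed.
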